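(* Let $A$ be a closed densely defined operator in $\mathcal H$ and $G$ a bounded metric operator on $\mathcal H$ (with $G^{-1}$ possibly unbounded). Consider the conditions: (i) $GD(A)=D(A^* )$ and $A^*G\xi=GA\xi$ for every $\xi\in D(A)$ (in particular $A\dashv A^*$ with intertwining operator $G$); (ii) $G^{1/2}AG^{-1/2}$, with domain $G^{1/2}D(A)$, is self-adjoint in $\mathcal H$; (iii) $A$ is self-adjoint in $\mathcal H(G)$ (so $A$ is quasi-self-adjoint); (iv) $GD(A)=D(G^{-1}A^* )$ and $A^*G\xi=GA\xi$ for every $\xi\in D(A)$. Then (i) $\Rightarrow$ (ii) $\Rightarrow$ (iii) $\Rightarrow$ (iv). If moreover the range of $A^*$ is contained in $D(G^{-1})$, then (i)–(iv) are equivalent.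
   Context: A metric operator on a Hilbert space $\mathcal H$ is a self-adjoint operator $G$ with $\langle G\xi,\xi\rangle>0$ for all nonzero $\xi\in D(G)$. For bounded $G$, $\mathcal H(G)$ is the completion of $\mathcal H$ in the norm $\|\xi\|_G=\|G^{1/2}\xi\|$ with inner product $\langle\xi,\eta\rangle_G=\langle G\xi,\eta\rangle$; ''$A$ self-adjoint in $\mathcal H(G)$'' means $A$, with domain $D(A)$, equals its adjoint $A^\#$ computed in $\mathcal H(G)$. A closed densely defined $A$ is called quasi-self-adjoint if there is a bounded metric operator $G$ such that $A$ is self-adjoint in $\mathcal H(G)$. $D(G^{-1}A^* )=\{\zeta\in D(A^* ): A^*\zeta\in D(G^{-1})\}$. $A\dashv B$ means there is an injective closed densely defined operator $T$ with densely defined inverse such that $D(A)\subset D(T)$, $AD(A)\subset D(T)$, $TD(A)\subset D(B)$ and $BT\xi=TA\xi$ for $\xi\in D(A)$. *)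

From Stdlib Require Import Reals.
Open Scope R_scope.

Record Cx := mkCx { Cre : R; Cim : R }.
Definition C0 : Cx := mkCx 0 0.
Definition C1 : Cx := mkCx 1 0.
Definition Cadd (a b : Cx) : Cx := mkCx (Cre a + Cre b) (Cim a + Cim b).
Definition Copp (a : Cx) : Cx := mkCx (- Cre a) (- Cim a).
Definition Csub (a b : Cx) : Cx := Cadd a (Copp b).
Definition Cmul (a b : Cx) : Cx :=
  mkCx (Cre a * Cre b - Cim a * Cim b) (Cre a * Cim b + Cim a * Cre b).
Definition Cconj (a : Cx) : Cx := mkCx (Cre a) (- Cim a).
Definition Cabs (a : Cx) : R := sqrt (Cre a * Cre a + Cim a * Cim a).

(* inner product linear in the first argument, conjugate-linear in the second *)
Record HilbertSpace := {
  hcar :> Type;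
  hzero : hcar;
  hadd : hcar -> hcar -> hcar;
  hopp : hcar -> hcar;
  hscal : Cx -> hcar -> hcar;
  hinner : hcar -> hcar -> Cx;
  hadd_assoc : forall x y z, hadd x (hadd y z) = hadd (hadd x y) z;
  hadd_comm : forall x y, hadd x y = hadd y x;
  hadd_zero : forall x, hadd x hzero = x;
  hadd_opp : forall x, hadd x (hopp x) = hzero;
  hscal_one : forall x, hscal C1 x = x;
  hscal_assoc : forall a b x, hscal a (hscal b x) = hscal (Cmul a b) x;
  hscal_distr_v : forall a x y, hscal a (hadd x y) = hadd (hscal a x) (hscal a y);
  hscal_distr_s : forall a b x, hscal (Cadd a b) x = hadd (hscal a x) (hscal b x);
  hinner_add_l : forall x y z, hinner (hadd x y) z = Cadd (hinner x z) (hinner y z);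
  hinner_scal_l : forall a x y, hinner (hscal a x) y = Cmul a (hinner x y);
  hinner_conj : forall x y, hinner y x = Cconj (hinner x y);
  hinner_pos : forall x, 0 <= Cre (hinner x x);
  hinner_def : forall x, hinner x x = C0 -> x = hzero;
  hcomplete : forall u : nat -> hcar,
    (forall eps, 0 < eps -> exists N, forall n m, (N <= n)%nat -> (N <= m)%nat ->
        sqrt (Cre (hinner (hadd (u n) (hopp (u m))) (hadd (u n) (hopp (u m))))) < eps) ->
    exists x, forall eps, 0 < eps -> exists N, forall n, (N <= n)%nat ->
        sqrt (Cre (hinner (hadd (u n) (hopp x)) (hadd (u n) (hopp x)))) < eps
}.

Arguments hzero {_}.
Arguments hadd {_} _ _.
Arguments hopp {_} _.
Arguments hscal {_} _ _.
Arguments hinner {_} _ _.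

Section HS.
Context {H : HilbertSpace}.

Definition hsub (x y : H) : H := hadd x (hopp y).
Definition hnorm (x : H) : R := sqrt (Cre (hinner x x)).

Definition conv (u : nat -> H) (x : H) : Prop :=
  forall eps, 0 < eps -> exists N, forall n, (N <= n)%nat -> hnorm (hsub (u n) x) < eps.

Definition Cconv0 (a : nat -> Cx) : Prop :=
  forall eps, 0 < eps -> exists N, forall n, (N <= n)%nat -> Cabs (a n) < eps.

Definition graph := H -> H -> Prop.

Definition is_linear_op (A : graph) : Prop :=
  A hzero hzero /\
  (forall x y x' y', A x y -> A x' y' -> A (hadd x x') (hadd y y')) /\
  (forall c x y, A x y -> A (hscal c x) (hscal c y)) /\
  (forall x y y', A x y -> A x y' -> y = y').

Definition densely_defined (A : graph) : Prop :=
  forall x eps, 0 < eps -> exists z y, A z y /\ hnorm (hsub x z) < eps.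

Definition closed_op (A : graph) : Prop :=
  forall (u v : nat -> H) x y,
    (forall n, A (u n) (v n)) -> conv u x -> conv v y -> A x y.

Definition adjoint (A : graph) : graph :=
  fun z w => forall x y, A x y -> hinner y z = hinner x w.

Definition self_adjoint (A : graph) : Prop :=
  forall z w, A z w <-> adjoint A z w.

Definition bounded_linear (T : H -> H) : Prop :=
  (forall x y, T (hadd x y) = hadd (T x) (T y)) /\
  (forall c x, T (hscal c x) = hscal c (T x)) /\
  (exists M, forall x, hnorm (T x) <= M * hnorm x).

Definition bounded_selfadjoint (T : H -> H) : Prop :=
  bounded_linear T /\ (forall x y, hinner (T x) y = hinner x (T y)).

Definition bounded_metric (G : H -> H) : Prop :=
  bounded_selfadjoint G /\
  (forall x, x <> hzero -> Cim (hinner (G x) x) = 0 /\ 0 < Cre (hinner (G x) x)).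

Definition pos_sqrt (G S : H -> H) : Prop :=
  bounded_selfadjoint S /\
  (forall x, Cim (hinner (S x) x) = 0 /\ 0 <= Cre (hinner (S x) x)) /\
  (forall x, S (S x) = G x).

Definition innerG (G : H -> H) (x y : H) : Cx := hinner (G x) y.
Definition gnorm (G : H -> H) (x : H) : R := sqrt (Cre (innerG G x x)).

Definition Gcauchy (G : H -> H) (u : nat -> H) : Prop :=
  forall eps, 0 < eps -> exists N, forall n m, (N <= n)%nat -> (N <= m)%nat ->
    gnorm G (hsub (u n) (u m)) < eps.

Definition Gconv (G : H -> H) (u : nat -> H) (x : H) : Prop :=
  forall eps, 0 < eps -> exists N, forall n, (N <= n)%nat -> gnorm G (hsub (u n) x) < eps.

(* For G-Cauchy sequences u, v (representing elements [u], [v] of H(G)):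
   ([u],[v]) lies in the graph of the adjoint A^# of A computed in H(G), i.e.
   <A x, [u]>_G = <x, [v]>_G for all x in D(A). *)
Definition Gadjoint_seq (A : graph) (G : H -> H) (u v : nat -> H) : Prop :=
  forall x y, A x y -> Cconv0 (fun n => Csub (innerG G y (u n)) (innerG G x (v n))).

Definition self_adjoint_in_HG (A : graph) (G : H -> H) : Prop :=
  (forall x y, A x y -> Gadjoint_seq A G (fun _ => x) (fun _ => y)) /\
  (forall u v, Gcauchy G u -> Gcauchy G v -> Gadjoint_seq A G u v ->
     exists x y, A x y /\ Gconv G u x /\ Gconv G v y).

Definition cond_i (A : graph) (G : H -> H) : Prop :=
  (forall z, (exists x y, A x y /\ z = G x) <-> (exists w, adjoint A z w)) /\
  (forall x y, A x y -> adjoint A (G x) (G y)).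

Definition cond_ii (A : graph) (S : H -> H) : Prop :=
  self_adjoint (fun z w => exists x y, A x y /\ z = S x /\ w = S y).

Definition cond_iii (A : graph) (G : H -> H) : Prop := self_adjoint_in_HG A G.

(* (iv) G D(A) = D(G^{-1} A^* ) and A^* G x = G A x for x in D(A);
   D(G^{-1}) = range of G *)
Definition cond_iv (A : graph) (G : H -> H) : Prop :=
  (forall z, (exists x y, A x y /\ z = G x) <->
             (exists w, adjoint A z w /\ exists t, w = G t)) /\
  (forall x y, A x y -> adjoint A (G x) (G y)).

(* range of A^* contained in D(G^{-1}) = range of G *)
Definition range_adj_in_dom_Ginv (A : graph) (G : H -> H) : Prop :=
  forall z w, adjoint A z w -> exists t, w = G t.

End HS.

(* Write S = G^(1/2) and B = S A S^-1 with domain S D(A) (the graph [transformed]).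
   The proof rests on two observations:
   - the adjoint formula B^* = S^-1 A^* S^-1, i.e. (z, w) in B^* iff (S z, S w) in A^*;
   - H(G) is isometric to the closure of ran S in H via x |-> S x, because
     <x, y>_G = <S x, S y>; so G-Cauchy sequences, G-limits and the adjoint A^# in
     H(G) translate into convergence of S u in H.
   Then (i) => (ii) uses G D(A) = D(A^* ), injectivity of S and uniqueness of
   adjoints of densely defined operators; (ii) => (iii) takes limits p = lim S u,
   q = lim S v and uses (p, q) in B^* = B; (iii) => (ii) approximates elements of
   B^* through the dense range of S; (ii) => (iv) uses that ran (B + i) = H for
   self-adjoint B, and ran (B + i) is contained in ran S, so S is onto; (iii) => (iv)
   goes through (ii); and (iv) => (i) is immediate when ran A^* lies in D(G^-1). *)

From Stdlib Require Import Reals Lra Lia IndefiniteDescription Classical.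
Open Scope R_scope.

Lemma Cx_eq (a b : Cx) : Cre a = Cre b -> Cim a = Cim b -> a = b.
Proof. destruct a, b; simpl; intros; subst; reflexivity. Qed.

Ltac cx := apply Cx_eq; unfold Csub, Cadd, Copp, Cmul, Cconj, C0, C1; simpl;
  first [ring | field | lra].

Definition iC : Cx := mkCx 0 1.

Lemma Csub_eq0 (a b : Cx) : Csub a b = C0 -> a = b.
Proof.
  destruct a, b; unfold Csub, Cadd, Copp, C0; simpl; intro E; injection E; intros.
  apply Cx_eq; simpl; lra.
Qed.

Section InnerAlgebra.
Context {H : HilbertSpace}.
Implicit Types x y z : H.

Lemma hadd0l x : hadd hzero x = x.
Proof. rewrite hadd_comm; apply hadd_zero. Qed.

Lemma hadd_absorb x y : hadd x y = x -> y = hzero.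
Proof.
  intro E.
  transitivity (hadd y (hadd x (hopp x))); [rewrite hadd_opp, hadd_zero; auto|].
  rewrite hadd_assoc, (hadd_comm _ y x), E. apply hadd_opp.
Qed.

Lemma hscal0 x : hscal C0 x = hzero.
Proof.
  apply (hadd_absorb (hscal C0 x)).
  rewrite <- hscal_distr_s. f_equal. cx.
Qed.

Lemma hopp_unique x y : hadd x y = hzero -> y = hopp x.
Proof.
  intro E.
  transitivity (hadd y (hadd x (hopp x))); [rewrite hadd_opp, hadd_zero; auto|].
  rewrite hadd_assoc, (hadd_comm _ y x), E. apply hadd0l.
Qed.

(* The opposite is scaling by -1, so everything reduces to [hadd] and [hscal]. *)
Lemma hoppE x : hopp x = hscal (mkCx (-1) 0) x.
Proof.
  symmetry; apply hopp_unique.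
  transitivity (hadd (hscal C1 x) (hscal (mkCx (-1) 0) x)); [rewrite hscal_one; auto|].
  rewrite <- hscal_distr_s. replace (Cadd C1 (mkCx (-1) 0)) with C0 by cx. apply hscal0.
Qed.

Lemma ip_oppl x z : hinner (hopp x) z = Copp (hinner x z).
Proof. rewrite hoppE, hinner_scal_l. cx. Qed.
Lemma ip_subl x y z : hinner (hsub x y) z = Csub (hinner x z) (hinner y z).
Proof. unfold hsub. rewrite hinner_add_l, ip_oppl. reflexivity. Qed.
Lemma ip_zerol z : hinner hzero z = C0.
Proof. rewrite <- (hscal0 z), hinner_scal_l. cx. Qed.

Lemma hsub_eq0 x y : hsub x y = hzero -> x = y.
Proof.
  unfold hsub; intro E.
  transitivity (hadd (hadd x (hopp y)) y).
  - rewrite <- hadd_assoc, (hadd_comm _ (hopp y) y), hadd_opp, hadd_zero; auto.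
  - rewrite E. apply hadd0l.
Qed.

Lemma hext x y : (forall z, hinner x z = hinner y z) -> x = y.
Proof. intro E. apply hsub_eq0, hinner_def. rewrite ip_subl, E. cx. Qed.

Lemma ip_addr x y z : hinner x (hadd y z) = Cadd (hinner x y) (hinner x z).
Proof.
  rewrite (hinner_conj _ (hadd y z) x), hinner_add_l, (hinner_conj _ y x), (hinner_conj _ z x).
  cx.
Qed.
Lemma ip_scalr c x z : hinner x (hscal c z) = Cmul (Cconj c) (hinner x z).
Proof. rewrite (hinner_conj _ _ x), hinner_scal_l, (hinner_conj _ z x). cx. Qed.
Lemma ip_subr x y z : hinner x (hsub y z) = Csub (hinner x y) (hinner x z).
Proof. rewrite (hinner_conj _ _ x), ip_subl, (hinner_conj _ y x), (hinner_conj _ z x). cx. Qed.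
Lemma ip_zeror z : hinner z hzero = C0.
Proof. rewrite (hinner_conj _ hzero z), ip_zerol. cx. Qed.

End InnerAlgebra.

Ltac vec := apply hext; intro;
  repeat rewrite ?hinner_add_l, ?hinner_scal_l, ?ip_oppl, ?ip_subl, ?ip_zerol; cx.

(** * Norms: Cauchy-Schwarz and the triangle inequality *)

Section Norms.
Context {H : HilbertSpace}.
Implicit Types x y z : H.

Definition sqn x : R := Cre (hinner x x).

Lemma sqn_ge0 x : 0 <= sqn x.
Proof. apply hinner_pos. Qed.

Lemma im_self x : Cim (hinner x x) = 0.
Proof.
  pose proof (hinner_conj _ x x) as E. destruct (hinner x x) as [a b].
  unfold Cconj in E; simpl in *. injection E; lra.
Qed.

Lemma sqn_eq0 x : sqn x = 0 -> x = hzero.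
Proof. intro E. apply hinner_def, Cx_eq; [exact E | apply im_self]. Qed.

Lemma re_sym x y : Cre (hinner y x) = Cre (hinner x y).
Proof. rewrite (hinner_conj _ x y). reflexivity. Qed.

Lemma sqn_add x y : sqn (hadd x y) = sqn x + sqn y + 2 * Cre (hinner x y).
Proof.
  unfold sqn. rewrite hinner_add_l, !ip_addr.
  unfold Cadd; simpl. rewrite (re_sym y x). ring.
Qed.

Lemma sqn_sub x y : sqn (hsub x y) = sqn x + sqn y - 2 * Cre (hinner x y).
Proof.
  unfold sqn. rewrite ip_subl, !ip_subr.
  unfold Csub, Cadd, Copp; simpl. rewrite (re_sym y x). ring.
Qed.

Lemma sqn_scal c x : sqn (hscal c x) = (Cre c * Cre c + Cim c * Cim c) * sqn x.
Proof.
  unfold sqn. rewrite hinner_scal_l, ip_scalr. destruct c as [a b].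
  unfold Cmul, Cconj; simpl. rewrite im_self. ring.
Qed.

Lemma parallelogram x y : sqn (hadd x y) + sqn (hsub x y) = 2 * sqn x + 2 * sqn y.
Proof. rewrite sqn_add, sqn_sub. ring. Qed.

Lemma re_scall c x y :
  Cre (hinner (hscal c x) y) = Cre c * Cre (hinner x y) - Cim c * Cim (hinner x y).
Proof. rewrite hinner_scal_l. reflexivity. Qed.
Lemma re_scalr c x y :
  Cre (hinner x (hscal c y)) = Cre c * Cre (hinner x y) + Cim c * Cim (hinner x y).
Proof. rewrite ip_scalr. destruct c; unfold Cmul, Cconj; simpl; ring. Qed.

Lemma hnorm_sqr x : hnorm x * hnorm x = sqn x.
Proof. apply sqrt_sqrt, sqn_ge0. Qed.
Lemma hnorm_ge0 x : 0 <= hnorm x.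
Proof. apply sqrt_pos. Qed.

Lemma hnorm_eq0 x : hnorm x = 0 -> x = hzero.
Proof. intro E. apply sqn_eq0. rewrite <- hnorm_sqr, E. ring. Qed.

Lemma sqr_le a b : 0 <= a -> 0 <= b -> a * a <= b * b -> a <= b.
Proof. intros; nra. Qed.

(* Real part of the Cauchy-Schwarz inequality, from the positivity of
   ||b x - a y||^2 with a = ||x||, b = ||y||. *)
Lemma re_cauchy_schwarz x y : Cre (hinner x y) <= hnorm x * hnorm y.
Proof.
  destruct (Req_dec (hnorm x) 0) as [Ex|Ex].
  { rewrite Ex, (hnorm_eq0 x Ex), ip_zerol. simpl. lra. }
  destruct (Req_dec (hnorm y) 0) as [Ey|Ey].
  { rewrite Ey, (hnorm_eq0 y Ey), ip_zeror. simpl. lra. }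
  pose proof (hnorm_ge0 x); pose proof (hnorm_ge0 y).
  set (a := hnorm x) in *; set (b := hnorm y) in *.
  pose proof (sqn_ge0 (hsub (hscal (mkCx b 0) x) (hscal (mkCx a 0) y))) as P.
  rewrite sqn_sub, !sqn_scal, re_scall, re_scalr in P. simpl in P.
  rewrite <- !hnorm_sqr in P. fold a b in P.
  assert (0 < a * b) by (apply Rmult_lt_0_compat; lra).
  nra.
Qed.

Lemma hnorm_scal c x :
  hnorm (hscal c x) = sqrt (Cre c * Cre c + Cim c * Cim c) * hnorm x.
Proof.
  unfold hnorm. fold (sqn (hscal c x)) (sqn x).
  rewrite sqn_scal, sqrt_mult; [reflexivity | nra | apply sqn_ge0].
Qed.

Lemma hnorm_unit c x : Cre c * Cre c + Cim c * Cim c = 1 -> hnorm (hscal c x) = hnorm x.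
Proof. intro E. rewrite hnorm_scal, E, sqrt_1. ring. Qed.

(* Rotating x by -1 and by -i gives the bounds on |Re| and |Im|. *)
Lemma abs_re_le x y : Rabs (Cre (hinner x y)) <= hnorm x * hnorm y.
Proof.
  apply Rabs_le. split; [|apply re_cauchy_schwarz].
  pose proof (re_cauchy_schwarz (hscal (mkCx (-1) 0) x) y) as P.
  rewrite re_scall, hnorm_unit in P by (simpl; ring). simpl in P. lra.
Qed.

Lemma abs_im_le x y : Rabs (Cim (hinner x y)) <= hnorm x * hnorm y.
Proof.
  pose proof (abs_re_le (hscal (mkCx 0 (-1)) x) y) as P.
  rewrite re_scall, hnorm_unit in P by (simpl; ring). simpl in P.
  replace (0 * Cre (hinner x y) - -1 * Cim (hinner x y)) with (Cim (hinner x y)) in P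
    by ring.
  exact P.
Qed.

Lemma hnorm_triangle x y : hnorm (hadd x y) <= hnorm x + hnorm y.
Proof.
  pose proof (hnorm_ge0 x); pose proof (hnorm_ge0 y).
  apply sqr_le; [apply hnorm_ge0 | lra |].
  rewrite hnorm_sqr, sqn_add, <- !hnorm_sqr. pose proof (re_cauchy_schwarz x y). nra.
Qed.

Lemma dist_triangle x y z : hnorm (hsub x z) <= hnorm (hsub x y) + hnorm (hsub y z).
Proof. replace (hsub x z) with (hadd (hsub x y) (hsub y z)) by vec. apply hnorm_triangle. Qed.

Lemma dist_sym x y : hnorm (hsub x y) = hnorm (hsub y x).
Proof.
  replace (hsub y x) with (hscal (mkCx (-1) 0) (hsub x y)) by vec.
  rewrite hnorm_unit; simpl; auto; ring.
Qed.

End Norms.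

Lemma cv_ext (a b : nat -> R) l : (forall n, a n = b n) -> Un_cv a l -> Un_cv b l.
Proof.
  intros E Ha eps He. destruct (Ha eps He) as [N HN].
  exists N. intros n Hn. rewrite <- E. auto.
Qed.

Lemma cv_const c : Un_cv (fun _ => c) c.
Proof. intros eps He. exists O. intros. unfold Rdist. rewrite Rminus_diag, Rabs_R0. lra. Qed.

Lemma cv_dominated (a b : nat -> R) l K : 0 <= K ->
  (forall n, Rabs (a n - l) <= K * b n) -> Un_cv b 0 -> Un_cv a l.
Proof.
  intros HK Hab Hb eps He.
  assert (He' : eps / (K + 1) > 0) by (apply Rdiv_lt_0_compat; lra).
  destruct (Hb _ He') as [N HN]. exists N. intros n Hn. specialize (HN n Hn).
  unfold Rdist in *. rewrite Rminus_0_r in HN. specialize (Hab n).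
  assert (b n < eps / (K + 1)) by (pose proof (Rle_abs (b n)); lra).
  assert (K * (eps / (K + 1)) < eps).
  { apply (Rmult_lt_reg_r (K + 1)); [lra|]. field_simplify; lra. }
  assert (K * b n <= K * (eps / (K + 1))) by (apply Rmult_le_compat_l; lra).
  lra.
Qed.

Lemma inv_succ_small r : r > 0 -> exists N, forall n, (N <= n)%nat -> / INR (S n) < r.
Proof.
  intro Hr. destruct (INR_unbounded (/ r)) as [N HN]. exists N. intros n Hn.
  assert (INR N <= INR n) by (apply le_INR; lia).
  assert (0 < / r) by (apply Rinv_0_lt_compat; lra).
  rewrite S_INR. apply (Rmult_lt_reg_r (INR n + 1)); [lra|]. rewrite Rinv_l by lra.
  apply (Rmult_lt_reg_l (/ r)); auto.
  rewrite <- Rmult_assoc, Rinv_l, Rmult_1_l, Rmult_1_r by lra. lra.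
Qed.

Lemma inv_succ_cv : Un_cv (fun n => / INR (S n)) 0.
Proof.
  intros eps He. destruct (inv_succ_small eps He) as [N HN]. exists N. intros n Hn.
  unfold Rdist. rewrite Rminus_0_r, Rabs_right; [apply HN; lia|].
  apply Rle_ge, Rlt_le, Rinv_0_lt_compat, lt_0_INR; lia.
Qed.

Lemma inv_succ_pos n : 0 < / INR (S n).
Proof. apply Rinv_0_lt_compat, lt_0_INR; lia. Qed.

Lemma inf_exists {T : Type} (P : T -> Prop) (f : T -> R) :
  (exists t, P t) -> (forall t, P t -> 0 <= f t) ->
  exists d, (forall t, P t -> d <= f t) /\
            (forall eps, 0 < eps -> exists t, P t /\ f t < d + eps).
Proof.
  intros [t0 Pt0] Hpos.
  set (E := fun r => exists t, P t /\ r = - f t).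
  destruct (completeness E) as [L [HL1 HL2]].
  { exists 0. intros r [t [Pt ->]]. specialize (Hpos t Pt). lra. }
  { exists (- f t0), t0. auto. }
  exists (- L). split.
  - intros t Pt. assert (E (- f t)) by (exists t; auto). specialize (HL1 _ H). lra.
  - intros eps He. apply NNPP. intro Hn.
    assert (Ub : is_upper_bound E (L - eps)).
    { intros r [t [Pt ->]]. apply Rnot_lt_le. intro Hr. apply Hn. exists t. split; auto. lra. }
    specialize (HL2 _ Ub). lra.
Qed.

Lemma nonpos_of_quadratic r a : 0 <= a ->
  (forall t, 0 < t -> 2 * t * r <= t * t * a) -> r <= 0.
Proof.
  intros Ha Ht. apply Rnot_lt_le. intro Hr.
  assert (Hpos : r / (a + 1) > 0) by (apply Rdiv_lt_0_compat; lra).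
  specialize (Ht _ Hpos).
  assert (r / (a + 1) * a < 2 * r).
  { apply (Rmult_lt_reg_r (a + 1)); [lra|]. field_simplify; [nra | lra]. }
  assert (2 * r <= r / (a + 1) * a).
  { apply (Rmult_le_reg_l (r / (a + 1))); [lra | nra]. }
  lra.
Qed.

Definition Ccv (a : nat -> Cx) (l : Cx) :=
  Un_cv (fun n => Cre (a n)) (Cre l) /\ Un_cv (fun n => Cim (a n)) (Cim l).

Lemma Ccv_ext (a b : nat -> Cx) l : (forall n, a n = b n) -> Ccv a l -> Ccv b l.
Proof. intros E [A1 A2]. split; eapply cv_ext; eauto; intro n; simpl; rewrite E; auto. Qed.

Lemma Ccv_const c : Ccv (fun _ => c) c.
Proof. split; apply cv_const. Qed.

Lemma Ccv_sub a b la lb :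
  Ccv a la -> Ccv b lb -> Ccv (fun n => Csub (a n) (b n)) (Csub la lb).
Proof.
  intros [A1 A2] [B1 B2]. split.
  - exact (CV_minus _ _ _ _ A1 B1).
  - exact (CV_minus _ _ _ _ A2 B2).
Qed.

Lemma Ccv_unique a l1 l2 : Ccv a l1 -> Ccv a l2 -> l1 = l2.
Proof. intros [A1 A2] [B1 B2]. apply Cx_eq; eapply UL_sequence; eauto. Qed.

Lemma Cabs_re c : Rabs (Cre c) <= Cabs c.
Proof.
  unfold Cabs. rewrite <- sqrt_Rsqr_abs. apply sqrt_le_1_alt. unfold Rsqr.
  pose proof (Rle_0_sqr (Cim c)); unfold Rsqr in *; lra.
Qed.

Lemma Cabs_im c : Rabs (Cim c) <= Cabs c.
Proof.
  unfold Cabs. rewrite <- sqrt_Rsqr_abs. apply sqrt_le_1_alt. unfold Rsqr.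
  pose proof (Rle_0_sqr (Cre c)); unfold Rsqr in *; lra.
Qed.

Lemma Cabs_le c : Cabs c <= Rabs (Cre c) + Rabs (Cim c).
Proof.
  pose proof (Rabs_pos (Cre c)); pose proof (Rabs_pos (Cim c)).
  unfold Cabs. apply sqr_le; [apply sqrt_pos | lra |].
  rewrite sqrt_sqrt by nra.
  assert (Rabs (Cre c) * Rabs (Cre c) = Cre c * Cre c)
    by (rewrite <- Rabs_mult; apply Rabs_right; nra).
  assert (Rabs (Cim c) * Rabs (Cim c) = Cim c * Cim c)
    by (rewrite <- Rabs_mult; apply Rabs_right; nra).
  nra.
Qed.

Lemma Cconv0_Ccv (a : nat -> Cx) : Cconv0 a <-> Ccv a C0.
Proof.
  split.
  - intro Hc. split; intros eps He; destruct (Hc eps He) as [N HN]; exists N;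
      intros n Hn; specialize (HN n Hn); unfold Rdist; simpl; rewrite Rminus_0_r.
    + pose proof (Cabs_re (a n)). lra.
    + pose proof (Cabs_im (a n)). lra.
  - intros [A1 A2] eps He.
    assert (e : eps / 2 > 0) by lra.
    destruct (A1 _ e) as [N1 H1]. destruct (A2 _ e) as [N2 H2]. exists (max N1 N2).
    intros n Hn. specialize (H1 n ltac:(lia)). specialize (H2 n ltac:(lia)).
    unfold Rdist in *; simpl in *. rewrite Rminus_0_r in *.
    pose proof (Cabs_le (a n)). lra.
Qed.

Lemma Cconv0_const c : Cconv0 (fun _ => c) -> c = C0.
Proof. intro Hc. apply Cconv0_Ccv in Hc. eapply Ccv_unique; [apply Ccv_const | exact Hc]. Qed.

Section Convergence.
Context {H : HilbertSpace}.
Implicit Types x y z : H.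
Implicit Types u v : nat -> H.

Lemma conv_cv u x : conv u x <-> Un_cv (fun n => hnorm (hsub (u n) x)) 0.
Proof.
  split; intros Hc eps He; destruct (Hc eps He) as [N HN]; exists N; intros n Hn;
    specialize (HN n Hn); unfold Rdist in *; rewrite Rminus_0_r in *;
    pose proof (hnorm_ge0 (hsub (u n) x)).
  - rewrite Rabs_right; lra.
  - rewrite Rabs_right in HN; lra.
Qed.

Lemma conv_ext u v x : (forall n, u n = v n) -> conv u x -> conv v x.
Proof.
  intros E Hu eps He. destruct (Hu eps He) as [N HN].
  exists N. intros n Hn. rewrite <- E. auto.
Qed.

Lemma conv_const x : conv (fun _ => x) x.
Proof.
  apply conv_cv, (cv_ext (fun _ => 0)); [|apply cv_const].
  intro n. replace (hsub x x) with (@hzero H) by vec.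
  unfold hnorm. rewrite ip_zerol. simpl. symmetry. apply sqrt_0.
Qed.

Lemma conv_add u v x y :
  conv u x -> conv v y -> conv (fun n => hadd (u n) (v n)) (hadd x y).
Proof.
  rewrite !conv_cv. intros Hu Hv.
  apply (cv_dominated _ (fun n => hnorm (hsub (u n) x) + hnorm (hsub (v n) y)) _ 1); [lra| |].
  - intro n. rewrite Rminus_0_r, Rabs_right by (apply Rle_ge, hnorm_ge0). rewrite Rmult_1_l.
    replace (hsub (hadd (u n) (v n)) (hadd x y)) with (hadd (hsub (u n) x) (hsub (v n) y))
      by vec.
    apply hnorm_triangle.
  - replace 0 with (0 + 0) by ring. apply CV_plus; auto.
Qed.

Lemma conv_scal c u x : conv u x -> conv (fun n => hscal c (u n)) (hscal c x).
Proof.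
  rewrite !conv_cv. intro Hu.
  refine (cv_dominated _ _ _ _ (sqrt_pos (Cre c * Cre c + Cim c * Cim c)) _ Hu).
  intro n. rewrite Rminus_0_r, Rabs_right by (apply Rle_ge, hnorm_ge0).
  replace (hsub (hscal c (u n)) (hscal c x)) with (hscal c (hsub (u n) x)) by vec.
  rewrite hnorm_scal. lra.
Qed.

Lemma conv_sub_l a u x : conv u x -> conv (fun n => hsub a (u n)) (hsub a x).
Proof.
  intro Hu. apply (conv_ext (fun n => hadd a (hscal (mkCx (-1) 0) (u n)))).
  - intro n. unfold hsub. rewrite hoppE. reflexivity.
  - unfold hsub. rewrite hoppE. apply conv_add; [apply conv_const | apply conv_scal, Hu].
Qed.

Lemma conv_sqn u x : conv u x -> Un_cv (fun n => sqn (u n)) (sqn x).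
Proof.
  intro Hu.
  assert (Hn : Un_cv (fun n => hnorm (u n)) (hnorm x)).
  { apply conv_cv in Hu. refine (cv_dominated _ _ _ 1 ltac:(lra) _ Hu).
    intro n. rewrite Rmult_1_l. apply Rabs_le. split.
    - pose proof (hnorm_triangle (hsub x (u n)) (u n)) as T.
      replace (hadd (hsub x (u n)) (u n)) with x in T by vec.
      rewrite dist_sym in T. lra.
    - pose proof (hnorm_triangle (hsub (u n) x) x) as T.
      replace (hadd (hsub (u n) x) x) with (u n) in T by vec. lra. }
  pose proof (CV_mult _ _ _ _ Hn Hn) as Hsq. rewrite hnorm_sqr in Hsq.
  eapply cv_ext; [|exact Hsq]. intro n. apply hnorm_sqr.
Qed.

Lemma conv_inner_r u x z : conv u x -> Ccv (fun n => hinner z (u n)) (hinner z x).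
Proof.
  intro Hc. apply conv_cv in Hc.
  split; apply (cv_dominated _ (fun n => hnorm (hsub (u n) x)) _ (hnorm z) (hnorm_ge0 z));
    auto; intro n; rewrite Rmult_comm.
  - replace (Cre (hinner z (u n)) - Cre (hinner z x)) with (Cre (hinner (hsub (u n) x) z))
      by (rewrite ip_subl, (hinner_conj _ (u n) z), (hinner_conj _ x z); reflexivity).
    apply abs_re_le.
  - replace (Cim (hinner z (u n)) - Cim (hinner z x)) with (- Cim (hinner (hsub (u n) x) z))
      by (rewrite ip_subl, (hinner_conj _ (u n) z), (hinner_conj _ x z); simpl; ring).
    rewrite Rabs_Ropp. apply abs_im_le.
Qed.

Lemma conv_unique u x y : conv u x -> conv u y -> x = y.
Proof.
  intros Hx Hy. apply hsub_eq0, hnorm_eq0, Rle_antisym; [|apply hnorm_ge0].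
  apply Rnot_lt_le; intro Hp.
  assert (e : hnorm (hsub x y) / 2 > 0) by lra.
  destruct (Hx _ e) as [N1 H1]. destruct (Hy _ e) as [N2 H2].
  specialize (H1 (max N1 N2) ltac:(lia)). specialize (H2 (max N1 N2) ltac:(lia)).
  pose proof (dist_triangle x (u (max N1 N2)) y) as Q.
  rewrite (dist_sym x (u (max N1 N2))) in Q. lra.
Qed.

Definition cauchy u : Prop :=
  forall eps, 0 < eps -> exists N, forall n m, (N <= n)%nat -> (N <= m)%nat ->
    hnorm (hsub (u n) (u m)) < eps.

Lemma conv_cauchy u x : conv u x -> cauchy u.
Proof.
  intros Hx eps He. assert (e : eps / 2 > 0) by lra. destruct (Hx _ e) as [N HN].
  exists N. intros n m Hn Hm. pose proof (dist_triangle (u n) x (u m)) as Q.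
  pose proof (HN n Hn). pose proof (HN m Hm). rewrite (dist_sym x (u m)) in Q. lra.
Qed.

Lemma cauchy_conv u : cauchy u -> exists x, conv u x.
Proof. apply hcomplete. Qed.

Lemma cauchy_dominated u v :
  (forall n m, hnorm (hsub (u n) (u m)) <= hnorm (hsub (v n) (v m))) ->
  cauchy v -> cauchy u.
Proof.
  intros Hle Hv eps He. destruct (Hv eps He) as [N HN]. exists N. intros n m Hn Hm.
  specialize (Hle n m). specialize (HN n m Hn Hm). lra.
Qed.

End Convergence.

(** * A subspace with trivial orthogonal complement is dense *)

(* Projection-theorem argument: take a minimizing sequence for the distance from
   h to M; it is Cauchy by the parallelogram law, and the residual of its limit is
   orthogonal to M, hence zero. *)
Section Density.
Context {H : HilbertSpace} (M : H -> Prop).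
Hypothesis M0 : M hzero.
Hypothesis Madd : forall a b, M a -> M b -> M (hadd a b).
Hypothesis Mscal : forall c a, M a -> M (hscal c a).
Variable h : H.

Definition lower_sqdist (d : R) : Prop := forall a, M a -> d <= sqn (hsub h a).

Definition minimizing (d : R) (m : nat -> H) : Prop :=
  (forall n, M (m n)) /\ forall n, sqn (hsub h (m n)) < d + / INR (S n).

(* Parallelogram law applied to h - m n and h - m k, whose midpoint lies in M. *)
Lemma minimizing_increments d m : lower_sqdist d -> minimizing d m ->
  forall n k, sqn (hsub (m n) (m k)) <= 2 * / INR (S n) + 2 * / INR (S k).
Proof.
  intros Hd [Mm Hm] n k.
  set (mid := hscal (mkCx (1/2) 0) (hadd (m n) (m k))).
  pose proof (Hd mid (Mscal _ _ (Madd _ _ (Mm n) (Mm k)))) as Hmid.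
  pose proof (parallelogram (hsub h (m k)) (hsub h (m n))) as Par.
  replace (hadd (hsub h (m k)) (hsub h (m n))) with (hscal (mkCx 2 0) (hsub h mid)) in Par
    by (unfold mid; vec).
  replace (hsub (hsub h (m k)) (hsub h (m n))) with (hsub (m n) (m k)) in Par by vec.
  rewrite sqn_scal in Par. simpl in Par. pose proof (Hm n). pose proof (Hm k). lra.
Qed.

Lemma minimizing_cauchy d m : lower_sqdist d -> minimizing d m -> cauchy m.
Proof.
  intros Hd Hm eps He. assert (e2 : eps * eps / 4 > 0) by nra.
  destruct (inv_succ_small _ e2) as [N HN]. exists N. intros n k Hn Hk.
  pose proof (minimizing_increments d m Hd Hm n k) as C.
  pose proof (HN n Hn). pose proof (HN k Hk).
  rewrite <- hnorm_sqr in C. pose proof (hnorm_ge0 (hsub (m n) (m k))). nra.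
Qed.

Lemma lower_sqdist_limit d u y :
  lower_sqdist d -> (forall n, M (u n)) -> conv u y -> d <= sqn (hsub h y).
Proof.
  intros Hd Mu Hu.
  apply (Rle_cv_lim (fun n => Hd _ (Mu n)) (cv_const d)).
  apply conv_sqn, conv_sub_l, Hu.
Qed.

(* The limit of a minimizing sequence is a best approximation, so the residual
   h - ms is orthogonal to M. *)
Lemma residual_orthogonal d m ms : lower_sqdist d -> minimizing d m -> conv m ms ->
  forall a, M a -> hinner (hsub h ms) a = C0.
Proof.
  intros Hd Hm Hms. set (e := hsub h ms).
  assert (He : sqn e <= d).
  { replace d with (d + 0) by ring.
    apply (Rle_cv_lim (fun n => Rlt_le _ _ (proj2 Hm n))).
    - apply conv_sqn, conv_sub_l, Hms.
    - apply CV_plus; [apply cv_const | apply inv_succ_cv]. }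
  assert (Hre : forall a, M a -> Cre (hinner e a) <= 0).
  { intros a Ma. apply (nonpos_of_quadratic _ (sqn a) (sqn_ge0 a)). intros t Ht.
    pose proof (conv_add _ _ _ _ Hms (conv_const (hscal (mkCx t 0) a))) as Hlim.
    pose proof (lower_sqdist_limit d _ _ Hd
                  (fun n => Madd _ _ (proj1 Hm n) (Mscal (mkCx t 0) _ Ma)) Hlim) as Hmt.
    replace (hsub h (hadd ms (hscal (mkCx t 0) a))) with (hsub e (hscal (mkCx t 0) a))
      in Hmt by (unfold e; vec).
    rewrite sqn_sub, sqn_scal, re_scalr in Hmt. simpl in Hmt. nra. }
  intros a Ma.
  pose proof (Hre _ (Mscal (mkCx (-1) 0) _ Ma)) as Hneg.
  pose proof (Hre _ (Mscal (mkCx 0 1) _ Ma)) as Him.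
  pose proof (Hre _ (Mscal (mkCx 0 (-1)) _ Ma)) as Hnim.
  rewrite re_scalr in Hneg, Him, Hnim. simpl in Hneg, Him, Hnim.
  pose proof (Hre a Ma). apply Cx_eq; simpl; lra.
Qed.

Lemma dense_of_trivial_perp :
  (forall e, (forall a, M a -> hinner a e = C0) -> e = hzero) ->
  exists u : nat -> H, (forall n, M (u n)) /\ conv u h.
Proof.
  intro Hperp.
  destruct (inf_exists M (fun a => sqn (hsub h a)) (ex_intro _ _ M0) (fun a _ => sqn_ge0 _))
    as [d [Hd Happrox]].
  destruct (functional_choice (fun n a => M a /\ sqn (hsub h a) < d + / INR (S n)))
    as [m Hm].
  { intro n. apply Happrox, inv_succ_pos. }
  assert (Hmin : minimizing d m) by (split; intro n; apply Hm).
  destruct (cauchy_conv m (minimizing_cauchy d m Hd Hmin)) as [ms Hms].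
  exists m. split; [intro n; apply Hm|].
  enough (Hh : h = ms) by (rewrite Hh; exact Hms).
  apply hsub_eq0, Hperp. intros a Ma.
  rewrite (hinner_conj _ (hsub h ms) a), (residual_orthogonal d m ms Hd Hmin Hms a Ma). cx.
Qed.

End Density.

(** * Adjoints and self-adjoint graphs *)

Section Adjoints.
Context {H : HilbertSpace}.
Implicit Types T : @graph H.

Lemma adjoint_zero T : adjoint T hzero hzero.
Proof. intros x y _. rewrite !ip_zeror. reflexivity. Qed.

Lemma adjoint_add T z w z' w' :
  adjoint T z w -> adjoint T z' w' -> adjoint T (hadd z z') (hadd w w').
Proof. intros Hz Hz' x y Txy. rewrite !ip_addr, (Hz x y Txy), (Hz' x y Txy). reflexivity. Qed.

Lemma adjoint_scal T c z w : adjoint T z w -> adjoint T (hscal c z) (hscal c w).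
Proof. intros Hz x y Txy. rewrite !ip_scalr, (Hz x y Txy). reflexivity. Qed.

Lemma adjoint_closed T (z w : nat -> H) p q :
  (forall n, adjoint T (z n) (w n)) -> conv z p -> conv w q -> adjoint T p q.
Proof.
  intros Hzw Hp Hq x y Txy. apply (Ccv_unique (fun n => hinner y (z n))).
  - apply conv_inner_r, Hp.
  - apply (Ccv_ext (fun n => hinner x (w n))); [|apply conv_inner_r, Hq].
    intro n. symmetry. apply (Hzw n x y Txy).
Qed.

(* For a densely defined T, the adjoint is single-valued: w1 - w2 is orthogonal
   to D(T), hence zero. *)
Lemma adjoint_functional T z w1 w2 :
  densely_defined T -> adjoint T z w1 -> adjoint T z w2 -> w1 = w2.
Proof.
  intros Hdd H1 H2. apply hsub_eq0. set (d := hsub w1 w2).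
  assert (Orth : forall x y, T x y -> Cre (hinner d x) = 0).
  { intros x y Txy. rewrite re_sym. unfold d.
    rewrite ip_subr, <- (H1 x y Txy), <- (H2 x y Txy). simpl. ring. }
  apply hnorm_eq0. apply NNPP. intro Hn. pose proof (hnorm_ge0 d).
  destruct (Hdd d (hnorm d) ltac:(lra)) as (x & y & Txy & Hx).
  pose proof (sqn_sub d x) as Q. rewrite (Orth x y Txy) in Q.
  rewrite <- !hnorm_sqr in Q. pose proof (hnorm_ge0 x). pose proof (hnorm_ge0 (hsub d x)).
  nra.
Qed.

Lemma self_adjoint_symmetric T z w z' w' :
  self_adjoint T -> T z w -> T z' w' -> hinner w' z = hinner z' w.
Proof. intros HT Tzw Tzw'. exact (proj1 (HT z w) Tzw z' w' Tzw'). Qed.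

End Adjoints.

(* For a self-adjoint T, the range of T + i is the whole space: it is dense since
   its orthogonal complement is trivial, and closed since |(T + i) z|^2 =
   |T z|^2 + |z|^2 and T is closed. *)
Section RangePlusI.
Context {H : HilbertSpace} (T : @graph H) (HT : self_adjoint T).

Definition in_ran_plus_i (h : H) : Prop := exists z w, T z w /\ h = hadd w (hscal iC z).

Lemma sa_zero : T hzero hzero.
Proof. apply HT, adjoint_zero. Qed.

Lemma sa_add z w z' w' : T z w -> T z' w' -> T (hadd z z') (hadd w w').
Proof. intros. apply HT, adjoint_add; apply HT; auto. Qed.

Lemma sa_scal c z w : T z w -> T (hscal c z) (hscal c w).
Proof. intros. apply HT, adjoint_scal, HT; auto. Qed.

Lemma sa_sub z w z' w' : T z w -> T z' w' -> T (hsub z z') (hsub w w').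
Proof. intros. unfold hsub. rewrite !hoppE. apply sa_add, sa_scal; auto. Qed.

Lemma sa_pythagoras z w : T z w -> sqn (hadd w (hscal iC z)) = sqn w + sqn z.
Proof.
  intro Tzw.
  assert (Him : Cim (hinner w z) = 0).
  { pose proof (self_adjoint_symmetric T z w z w HT Tzw Tzw) as E.
    pose proof (hinner_conj _ w z) as E2. rewrite <- E in E2.
    destruct (hinner w z); unfold Cconj in E2; injection E2; simpl; lra. }
  rewrite sqn_add, sqn_scal, re_scalr, Him. simpl. ring.
Qed.

Lemma ran_plus_i_dense h :
  exists u : nat -> H, (forall n, in_ran_plus_i (u n)) /\ conv u h.
Proof.
  apply dense_of_trivial_perp.
  - exists hzero, hzero. split; [apply sa_zero | vec].
  - intros a b (z & w & Tzw & ->) (z' & w' & Tzw' & ->).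
    exists (hadd z z'), (hadd w w'). split; [apply sa_add; auto | vec].
  - intros c a (z & w & Tzw & ->).
    exists (hscal c z), (hscal c w). split; [apply sa_scal; auto | vec].
  - (* e orthogonal to the range satisfies T e (i e), hence |e|^2 = 0 *)
    intros e He.
    assert (Te : T e (hscal iC e)).
    { apply HT. intros z w Tzw.
      pose proof (He _ (ex_intro _ z (ex_intro _ w (conj Tzw eq_refl)))) as E.
      rewrite hinner_add_l, hinner_scal_l in E. rewrite ip_scalr.
      apply Cx_eq; unfold Cadd, Cmul, Cconj, iC, C0 in *; simpl in *; injection E;
        intros; lra. }
    pose proof (He _ (ex_intro _ e (ex_intro _ _ (conj Te eq_refl)))) as E.
    rewrite hinner_add_l, !hinner_scal_l in E.
    apply sqn_eq0. unfold sqn. apply (f_equal Cim) in E.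
    unfold Cadd, Cmul, iC, C0 in E; simpl in E. lra.
Qed.

Lemma ran_plus_i_closed (u : nat -> H) h :
  (forall n, in_ran_plus_i (u n)) -> conv u h -> in_ran_plus_i h.
Proof.
  intros Hu Hh.
  destruct (functional_choice (fun n (p : H * H) =>
              T (fst p) (snd p) /\ u n = hadd (snd p) (hscal iC (fst p)))) as [f Hf].
  { intro n. destruct (Hu n) as (z & w & Tzw & E). exists (z, w); auto. }
  set (z := fun n => fst (f n)); set (w := fun n => snd (f n)).
  assert (Tzw : forall n, T (z n) (w n)) by (intro n; apply Hf).
  assert (Dom : forall n k, hnorm (hsub (w n) (w k)) <= hnorm (hsub (u n) (u k)) /\
                            hnorm (hsub (z n) (z k)) <= hnorm (hsub (u n) (u k))).
  { intros n k.
    assert (E : hsub (u n) (u k)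
                = hadd (hsub (w n) (w k)) (hscal iC (hsub (z n) (z k)))).
    { unfold z, w. rewrite (proj2 (Hf n)), (proj2 (Hf k)). vec. }
    pose proof (sa_pythagoras _ _ (sa_sub _ _ _ _ (Tzw n) (Tzw k))) as P. rewrite <- E in P.
    pose proof (sqn_ge0 (hsub (w n) (w k))). pose proof (sqn_ge0 (hsub (z n) (z k))).
    split; apply sqr_le; try apply hnorm_ge0; rewrite !hnorm_sqr; lra. }
  pose proof (conv_cauchy _ _ Hh) as Cu.
  destruct (cauchy_conv z (cauchy_dominated z u (fun n k => proj2 (Dom n k)) Cu)) as [p Hp].
  destruct (cauchy_conv w (cauchy_dominated w u (fun n k => proj1 (Dom n k)) Cu)) as [q Hq].
  exists p, q. split.
  - apply HT. apply (adjoint_closed T z w); auto. intro n. apply HT, Tzw.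
  - apply (conv_unique u); [exact Hh|].
    apply (conv_ext (fun n => hadd (w n) (hscal iC (z n)))); [intro n; symmetry; apply Hf|].
    apply conv_add; [|apply conv_scal]; auto.
Qed.

Lemma ran_plus_i_full h : in_ran_plus_i h.
Proof.
  destruct (ran_plus_i_dense h) as [u [Hu Hh]]. exact (ran_plus_i_closed u h Hu Hh).
Qed.

End RangePlusI.

(** * The operator S A S^-1 and the four conditions *)

Section Proposition.
Context {H : HilbertSpace} (A : @graph H) (G S : H -> H).
Hypothesis Hdd : densely_defined A.
Hypothesis HG : bounded_metric G.
Hypothesis HS : pos_sqrt G S.

Definition transformed : @graph H := fun z w => exists x y, A x y /\ z = S x /\ w = S y.

Lemma Sadd x y : S (hadd x y) = hadd (S x) (S y).
Proof. apply HS. Qed.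
Lemma Sscal c x : S (hscal c x) = hscal c (S x).
Proof. apply HS. Qed.
Lemma Ssym x y : hinner (S x) y = hinner x (S y).
Proof. apply HS. Qed.
Lemma SS x : S (S x) = G x.
Proof. apply HS. Qed.
Lemma Gsym x y : hinner (G x) y = hinner x (G y).
Proof. apply HG. Qed.

Lemma S0 : S hzero = hzero.
Proof. rewrite <- (hscal0 hzero), Sscal, !hscal0. reflexivity. Qed.
Lemma Ssub x y : S (hsub x y) = hsub (S x) (S y).
Proof. unfold hsub. rewrite Sadd, !hoppE, Sscal. reflexivity. Qed.

Lemma innerG_S x y : innerG G x y = hinner (S x) (S y).
Proof. unfold innerG. rewrite <- SS, Ssym. reflexivity. Qed.

(* S is injective because G is positive definite. *)
Lemma S_inj x y : S x = S y -> x = y.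
Proof.
  intro E. apply hsub_eq0. apply NNPP. intro Hn.
  destruct (proj2 HG _ Hn) as [_ Hpos].
  rewrite <- SS, Ssub, E in Hpos. replace (hsub (S y) (S y)) with (@hzero H) in Hpos by vec.
  rewrite S0, ip_zerol in Hpos. simpl in Hpos. lra.
Qed.

(* The range of S is dense: its orthogonal complement is trivial. *)
Lemma ran_S_dense h : exists xs : nat -> H, conv (fun n => S (xs n)) h.
Proof.
  destruct (dense_of_trivial_perp (fun m => exists x, m = S x)) with (h := h)
    as [u [Mu Cu]].
  - exists hzero. symmetry; apply S0.
  - intros a b [x ->] [y ->]. exists (hadd x y). symmetry; apply Sadd.
  - intros c a [x ->]. exists (hscal c x). symmetry; apply Sscal.
  - intros e Hp. specialize (Hp (S (S e)) (ex_intro _ _ eq_refl)).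
    rewrite Ssym in Hp. assert (Hn : sqn (S e) = 0) by (unfold sqn; rewrite Hp; reflexivity).
    apply sqn_eq0 in Hn. rewrite <- S0 in Hn. exact (S_inj _ _ Hn).
  - destruct (functional_choice (fun n x => u n = S x) Mu) as [xs Hxs].
    exists xs. eapply conv_ext; [|exact Cu]. auto.
Qed.

(* Dictionary between H(G) and H: an element of H(G) given by a G-Cauchy sequence u
   corresponds to the limit of S u in H. *)
Lemma gnorm_sub x y : gnorm G (hsub x y) = hnorm (hsub (S x) (S y)).
Proof. unfold gnorm, hnorm. rewrite innerG_S, Ssub. reflexivity. Qed.

Lemma Gcauchy_iff u : Gcauchy G u <-> cauchy (fun n => S (u n)).
Proof.
  unfold Gcauchy, cauchy. split; intros Hc eps He;
    destruct (Hc eps He) as [N HN]; exists N; intros n m Hn Hm; specialize (HN n m Hn Hm);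
    [rewrite <- gnorm_sub | rewrite gnorm_sub]; exact HN.
Qed.

Lemma Gconv_iff u x : Gconv G u x <-> conv (fun n => S (u n)) (S x).
Proof.
  unfold Gconv, conv. split; intros Hc eps He;
    destruct (Hc eps He) as [N HN]; exists N; intros n Hn; specialize (HN n Hn);
    [rewrite <- gnorm_sub | rewrite gnorm_sub]; exact HN.
Qed.

Lemma Gadjoint_seq_iff u v : Gadjoint_seq A G u v <->
  forall x y, A x y ->
    Ccv (fun n => Csub (hinner (S y) (S (u n))) (hinner (S x) (S (v n)))) C0.
Proof.
  unfold Gadjoint_seq. split; intros Hg x y Axy; specialize (Hg x y Axy);
    [apply Cconv0_Ccv in Hg | apply Cconv0_Ccv]; (eapply Ccv_ext; [|exact Hg]);
    intro n; cbv beta; rewrite !innerG_S; reflexivity.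
Qed.

Lemma transformed_of x y : A x y -> transformed (S x) (S y).
Proof. intro Axy. exists x, y. auto. Qed.

Lemma adjoint_transformed z w : adjoint transformed z w <-> adjoint A (S z) (S w).
Proof.
  split.
  - intros Hb x y Axy. rewrite <- !Ssym. apply Hb. exists x, y; auto.
  - intros Ha a b (x & y & Axy & -> & ->). rewrite !Ssym. apply Ha; auto.
Qed.

(* Under (ii), S is onto: h = (B + i) S x = S (A x + i x) with B = S A S^-1. *)
Lemma S_onto : cond_ii A S -> forall h, exists x, h = S x.
Proof.
  intros Hii h.
  destruct (ran_plus_i_full transformed Hii h) as (z & w & (x & y & Axy & -> & ->) & ->).
  exists (hadd y (hscal iC x)). rewrite Sadd, Sscal. reflexivity.
Qed.

Lemma cond_i_ii : cond_i A G -> cond_ii A S.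
Proof.
  intros [Hdom Hint] z w. rewrite adjoint_transformed. split.
  - intros (x & y & Axy & -> & ->). rewrite !SS. apply Hint; auto.
  - intro Had. destruct (proj2 (Hdom (S z)) (ex_intro _ (S w) Had)) as (x & y & Axy & Ez).
    rewrite <- SS in Ez. apply S_inj in Ez.
    pose proof (Hint x y Axy) as Hi. rewrite <- !SS, <- Ez in Hi.
    pose proof (adjoint_functional A _ _ _ Hdd Had Hi) as Ew. apply S_inj in Ew.
    exists x, y; auto.
Qed.

Lemma cond_ii_iii : cond_ii A S -> cond_iii A G.
Proof.
  intro Hii. split.
  - intros x y Axy. apply Gadjoint_seq_iff. intros x' y' Axy'.
    rewrite (self_adjoint_symmetric _ _ _ _ _ Hii (transformed_of _ _ Axy)
                                                  (transformed_of _ _ Axy')).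
    replace C0 with (Csub (hinner (S x') (S y)) (hinner (S x') (S y))) by cx.
    apply Ccv_const.
  - intros u v Hu Hv Hadj.
    apply Gcauchy_iff, cauchy_conv in Hu as [p Hp].
    apply Gcauchy_iff, cauchy_conv in Hv as [q Hq].
    assert (Tpq : transformed p q).
    { apply Hii. intros a b (x & y & Axy & -> & ->). apply Csub_eq0.
      apply (Ccv_unique (fun n => Csub (hinner (S y) (S (u n))) (hinner (S x) (S (v n))))).
      - apply Ccv_sub; apply conv_inner_r; auto.
      - apply Gadjoint_seq_iff; auto. }
    destruct Tpq as (x0 & y0 & Axy0 & -> & ->). exists x0, y0.
    split; [exact Axy0|]. split; apply Gconv_iff; auto.
Qed.

Lemma cond_iii_ii : cond_iii A G -> cond_ii A S.
Proof.
  intros [Hsym Hmax] z w. rewrite adjoint_transformed. split.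
  - intros (x & y & Axy & -> & ->). rewrite !SS. intros x' y' Axy'.
    pose proof (Cconv0_const _ (Hsym x y Axy x' y' Axy')) as E. apply Csub_eq0 in E.
    unfold innerG in E. rewrite !Gsym in E. exact E.
  - intro Had. destruct (ran_S_dense z) as [xs Hx]. destruct (ran_S_dense w) as [ys Hy].
    destruct (Hmax xs ys) as (x0 & y0 & Axy0 & Gx & Gy).
    + apply Gcauchy_iff. exact (conv_cauchy _ _ Hx).
    + apply Gcauchy_iff. exact (conv_cauchy _ _ Hy).
    + apply Gadjoint_seq_iff. intros x y Axy.
      replace C0 with (Csub (hinner (S y) z) (hinner (S x) w))
        by (rewrite !Ssym, (Had x y Axy); cx).
      apply Ccv_sub; apply conv_inner_r; auto.
    + apply Gconv_iff in Gx. apply Gconv_iff in Gy.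
      exists x0, y0. split; [exact Axy0|].
      split; [exact (conv_unique _ _ _ Hx Gx) | exact (conv_unique _ _ _ Hy Gy)].
Qed.

Lemma cond_ii_iv : cond_ii A S -> cond_iv A G.
Proof.
  intro Hii.
  assert (Hint : forall x y, A x y -> adjoint A (G x) (G y)).
  { intros x y Axy. pose proof (proj1 (Hii _ _) (transformed_of x y Axy)) as Hb.
    apply adjoint_transformed in Hb. rewrite !SS in Hb. exact Hb. }
  split; [|exact Hint]. intro z. split.
  - intros (x & y & Axy & ->). exists (G y). split; [apply Hint; auto | exists y; auto].
  - intros (w & Had & t & ->). destruct (S_onto Hii z) as [q ->].
    assert (Hb : transformed q (S t)) by (apply Hii, adjoint_transformed; rewrite SS; exact Had).
    destruct Hb as (x0 & y0 & Axy0 & -> & _). exists x0, y0. split; auto. apply SS.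
Qed.

End Proposition.

(* With ran A^* inside D(G^-1), condition (iv) is literally condition (i). *)
Lemma cond_iv_i {H : HilbertSpace} (A : @graph H) (G : H -> H) :
  range_adj_in_dom_Ginv A G -> cond_iv A G -> cond_i A G.
Proof.
  intros Hr [Hdom Hint]. split; auto. intro z. rewrite Hdom. split.
  - intros (w & Hw & _). exists w; auto.
  - intros (w & Hw). exists w. split; auto. eapply Hr; eauto.
Qed.

Theorem proposition3p12 (H : HilbertSpace) (A : @graph H) (G S : H -> H) :
  is_linear_op A -> densely_defined A -> closed_op A ->
  bounded_metric G -> pos_sqrt G S ->
  (cond_i A G -> cond_ii A S) /\
  (cond_ii A S -> cond_iii A G) /\
  (cond_iii A G -> cond_iv A G) /\
  (range_adj_in_dom_Ginv A G ->
     (cond_i A G <-> cond_ii A S) /\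
     (cond_ii A S <-> cond_iii A G) /\
     (cond_iii A G <-> cond_iv A G)).
Proof.
  intros _ Hdd _ HG HS.
  pose proof (cond_i_ii A G S Hdd HG HS) as I_II.
  pose proof (cond_ii_iii A G S HS) as II_III.
  pose proof (cond_iii_ii A G S HG HS) as III_II.
  pose proof (cond_ii_iv A G S HS) as II_IV.
  split; [exact I_II|]. split; [exact II_III|]. split; [intro h; apply II_IV, III_II, h|].
  intro Hr. pose proof (cond_iv_i A G Hr) as IV_I.
  split; [split; [exact I_II | intro h; apply IV_I, II_IV, h]|].
  split; [split; [exact II_III | exact III_II]|].
  split; [intro h; apply II_IV, III_II, h | intro h; apply II_III, I_II, IV_I, h].
Qed.
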